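(* Let $d\ge 2$ and let $\{Q_j\}_{j=1}^{d^2}$ be a normal quasiprobability representation (NQPR) in dimension $d$. Then $$N^-\le N(\{Q_j\})\le N^+,\qquad N^-=\frac{\sqrt{d+1}-1}{d},\quad N^+=\frac{(d-1)\sqrt{d+1}-1}{d}.$$ The lower bound is attained if and only if there is a SIC $\{\Pi_j\}_{j=1}^{d^2}$ in dimension $d$ such that $Q_j=Q_j^-$ for all $j$. If $\{Q_j\}$ is group covariant, then the upper bound is attained if and only if there is a SIC $\{\Pi_j\}_{j=1}^{d^2}$ such that $Q_j=Q_j^+$ for all $j$.
   Context: A normal quasiprobability representation (NQPR) in dimension $d$ is a family $\{Q_j\}_{j=1}^{d^2}$ of Hermitian operators on $\mathbb{C}^d$ with $\operatorname{tr}(Q_j)=1$ and $\operatorname{tr}(Q_jQ_k)=d\,\delta_{jk}$ for all $j,k$ (so they form an orthogonal operator basis, and $\sum_j Q_j=d\cdot 1$). The negativity of a density operator $\rho$ with respect to $\{Q_j\}$ is $N(\rho)=\max\{0,-\min_j\operatorname{tr}(\rho Q_j)\}$, and the negativity $N(\{Q_j\})$ of the NQPR is the maximum of $N(\rho)$ over all density operators $\rho$ on $\mathbb{C}^d$ (equivalently, $|\min_j\lambda_{\min}(Q_j)|$). A SIC in dimension $d$ is a set $\{\Pi_j\}_{j=1}^{d^2}$ of rank-one projectors on $\mathbb{C}^d$ with $\operatorname{tr}(\Pi_j\Pi_k)=(d\delta_{jk}+1)/(d+1)$. Given a SIC, define $Q_j^\pm=\mp\sqrt{d+1}\,\Pi_j+\frac{1}{d}(1\pm\sqrt{d+1})$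 (where $1$ denotes the identity operator in the operator term). The symmetry group of $\{Q_j\}$ is the group of unitaries $U$ on $\mathbb{C}^d$ such that $\{UQ_jU^\dagger\}_j=\{Q_j\}_j$ as sets; $\{Q_j\}$ is group covariant if its symmetry group acts transitively (by conjugation) on $\{Q_j\}$. *)

From HB Require Import structures.
From mathcomp Require Import all_boot all_order all_algebra.
From mathcomp Require Import sesquilinear spectral.
From mathcomp Require Import complex.
From mathcomp Require Import boolp classical_sets reals.
Set Implicit Arguments. Unset Strict Implicit. Unset Printing Implicit Defensive.
Import Order.TTheory GRing.Theory Num.Theory.
Local Open Scope ring_scope.
Local Open Scope sesquilinear_scope.

Section NQPR.
Variable R : realType.
Local Notation C := (R[i]).

Definition hermitianmx (d : nat) (A : 'M[C]_d) : Prop := A ^t* = A.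

Definition psdmx (d : nat) (A : 'M[C]_d) : Prop :=
  forall v : 'rV[C]_d, 0 <= (v *m A *m v ^t*) 0 0.

Definition density (d : nat) (rho : 'M[C]_d) : Prop :=
  [/\ hermitianmx rho, psdmx rho & \tr rho = 1].

Definition NQPR (d : nat) (Q : 'I_(d ^ 2) -> 'M[C]_d) : Prop :=
  (forall j, hermitianmx (Q j)) /\ (forall j, \tr (Q j) = 1) /\
  (forall j k, \tr (Q j *m Q k) = (d%:R * (j == k)%:R)).

(* N(rho) = max{0, - min_j tr(rho Q_j)} (tr(rho Q_j) is real for Hermitian
   rho, Q_j; we take its real part) *)
Definition negativity_state (d : nat) (Q : 'I_(d ^ 2) -> 'M[C]_d)
  (rho : 'M[C]_d) : R :=
  Num.max 0 (\big[Num.max/0]_(j < d ^ 2) (- complex.Re (\tr (rho *m Q j)))).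

(* N({Q_j}) = max over density operators of N(rho) (the sup is attained) *)
Definition negativity (d : nat) (Q : 'I_(d ^ 2) -> 'M[C]_d) : R :=
  sup [set x : R | exists2 rho : 'M[C]_d, density rho & x = negativity_state Q rho].

Definition SIC (d : nat) (P : 'I_(d ^ 2) -> 'M[C]_d) : Prop :=
  (forall j, hermitianmx (P j)) /\ (forall j, P j *m P j = P j) /\
  (forall j, \rank (P j) = 1%N) /\
  (forall j k, \tr (P j *m P k) = (d%:R * (j == k)%:R + 1) / (d.+1)%:R).

Definition sqrtd1 (d : nat) : C := ((Num.sqrt (d.+1%:R : R))%:C)%C.

Definition Qminus (d : nat) (P : 'I_(d ^ 2) -> 'M[C]_d) (j : 'I_(d ^ 2)) : 'M[C]_d :=
  sqrtd1 d *: P j + ((1 - sqrtd1 d) / d%:R)%:M.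

Definition Qplus (d : nat) (P : 'I_(d ^ 2) -> 'M[C]_d) (j : 'I_(d ^ 2)) : 'M[C]_d :=
  - (sqrtd1 d *: P j) + ((1 + sqrtd1 d) / d%:R)%:M.

Definition symmetry (d : nat) (Q : 'I_(d ^ 2) -> 'M[C]_d) (U : 'M[C]_d) : Prop :=
  U \is unitarymx /\
  (forall j, exists k, U *m Q j *m U ^t* = Q k) /\
  (forall k, exists j, U *m Q j *m U ^t* = Q k).

Definition group_covariant (d : nat) (Q : 'I_(d ^ 2) -> 'M[C]_d) : Prop :=
  forall j k, exists U, symmetry Q U /\ U *m Q j *m U ^t* = Q k.

Definition Nminus (d : nat) : R := (Num.sqrt (d.+1%:R : R) - 1) / d%:R.
Definition Nplus (d : nat) : R :=
  ((d.-1)%:R * Num.sqrt (d.+1%:R : R) - 1) / d%:R.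

End NQPR.

From Pilot Require Import Defs.
From HB Require Import structures.
From mathcomp Require Import all_boot all_order all_algebra.
From mathcomp Require Import sesquilinear spectral complex.
From mathcomp Require Import boolp classical_sets reals.
From mathcomp Require Import ring lra.
Import Order.TTheory GRing.Theory Num.Theory.
Local Open Scope ring_scope.
Set Implicit Arguments. Unset Strict Implicit. Unset Printing Implicit Defensive.

(* The eigenvalues l of each Q_j satisfy sum l = tr Q_j = 1 and
   sum l^2 = tr (Q_j^2) = d, and the negativity is minus the smallest eigenvalue
   of all the Q_j, attained at a corresponding eigenvector.  Under these two
   constraints, Cauchy-Schwarz on the other d - 1 eigenvalues gives
   l_i >= (1 - (d-1) sqrt(d+1)) / d, with equality only if all the others equal
   (1 + sqrt(d+1)) / d; and if l >= -m everywhere, the numbers l_k + m are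
   nonnegative, so the square of their sum dominates their sum of squares, which
   gives m >= (sqrt(d+1) - 1) / d, with equality only for the spectrum
   (sqrt(d+1) - m, -m, ..., -m).  In both extremal cases Q_j = e Pi_j + (1 - e)/d
   with Pi_j a rank-one projector and e = +-sqrt(d+1), and tr (Q_j Q_k) = d delta_jk
   becomes the SIC condition on the Pi_j.  Attaining the upper bound only forces
   one Q_j to be extremal; covariance transports the corresponding eigenvector to
   a state with the same extremal expectation for every Q_k. *)

Lemma le_of_sqr_le (R : realDomainType) (x y : R) :
  0 <= y -> x ^+ 2 <= y ^+ 2 -> x <= y.
Proof. by move=> y_ge0 xy; nra. Qed.

Section FiniteSums.
Variables (R : realFieldType) (I : finType).
Implicit Types F : I -> R.

Lemma sumr_off F i : \sum_(k | k != i) F k = \sum_k F k - F i.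
Proof. by rewrite [in RHS](bigD1 i) //= addrAC subrr add0r. Qed.

Lemma sum_affine_sqr (P : pred I) F x y :
  \sum_(k | P k) (x * F k + y) ^+ 2 =
  x ^+ 2 * \sum_(k | P k) F k ^+ 2 + 2 * x * y * \sum_(k | P k) F k + #|P|%:R * y ^+ 2.
Proof.
rewrite -sumr_const mulr_suml !mulr_sumr -!big_split /=.
by apply: eq_bigr => k _; ring.
Qed.

Lemma sqr_sum_split F :
  (\sum_k F k) ^+ 2 = \sum_k F k ^+ 2 + \sum_k F k * \sum_(l | l != k) F l.
Proof.
rewrite expr2 mulr_suml -big_split; apply: eq_bigr => k _.
by rewrite (bigD1 k) //= mulrDr -expr2.
Qed.

Lemma sum_sqr_le_sqr_sum F : (forall k, 0 <= F k) ->
  \sum_k F k ^+ 2 <= (\sum_k F k) ^+ 2.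
Proof.
move=> F_ge0; rewrite sqr_sum_split lerDl sumr_ge0 // => k _.
by rewrite mulr_ge0 ?sumr_ge0.
Qed.

Lemma sum_sqr_eq_sqr_sum F : (forall k, 0 <= F k) ->
  \sum_k F k ^+ 2 = (\sum_k F k) ^+ 2 ->
  forall i, F i != 0 -> forall k, k != i -> F k = 0.
Proof.
move=> F_ge0; rewrite sqr_sum_split -[LHS]addr0 => /addrI /esym.
have cross_ge0 k : true -> 0 <= F k * \sum_(l | l != k) F l.
  by move=> _; rewrite mulr_ge0 ?sumr_ge0.
move=> /(psumr_eq0P cross_ge0) cross0 i Fi_neq0.
have /eqP := cross0 i isT; rewrite mulf_eq0 (negbTE Fi_neq0) /= => /eqP.
by apply: psumr_eq0P => k _.
Qed.

Lemma convex_ge (mu l : I -> R) c :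
  (forall i, 0 <= mu i) -> \sum_i mu i = 1 -> (forall i, c <= l i) ->
  c <= \sum_i mu i * l i.
Proof.
move=> mu_ge0 mu_sum c_le; rewrite -[c]mul1r -mu_sum mulr_suml.
by apply: ler_sum => i _; rewrite ler_wpM2l.
Qed.

Lemma convex_eq_min (mu l : I -> R) c :
  (forall i, 0 <= mu i) -> \sum_i mu i = 1 -> (forall i, c <= l i) ->
  \sum_i mu i * l i = c -> exists i, l i = c.
Proof.
move=> mu_ge0 mu_sum c_le mul_c.
have [i /andP[_ mu_i_gt0]] : exists i, true && (0 < mu i).
  by apply: psumr_neq0P => [i _|]; rewrite ?mu_ge0 // mu_sum; apply/eqP/oner_neq0.
have terms_ge0 k : true -> 0 <= mu k * (l k - c).
  by move=> _; rewrite mulr_ge0 ?subr_ge0.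
have : \sum_i mu i * (l i - c) = 0.
  rewrite (eq_bigr _ (fun i _ => mulrBr _ _ _)) sumrB -mulr_suml mu_sum.
  by rewrite mul1r mul_c subrr.
move=> /(psumr_eq0P terms_ge0)/(_ i isT)/eqP.
by rewrite mulf_eq0 gt_eqF //= subr_eq0 => /eqP; exists i.
Qed.

End FiniteSums.

Section Spectra.
Variables (R : rcfType) (d : nat) (l : 'I_d -> R).
Hypotheses (d_ge2 : (2 <= d)%N) (l_sum : \sum_k l k = 1)
  (l_sqr : \sum_k l k ^+ 2 = d%:R).
Local Notation D := (d%:R : R).
Local Notation s := (Num.sqrt (d.+1%:R : R)).

Let D_ge2 : 2 <= D. Proof. by rewrite (ler_nat R 2 d). Qed.
Let s_sqr : s ^+ 2 = D + 1. Proof. by rewrite sqr_sqrtr // -natr1. Qed.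
Let s_ge0 : 0 <= s. Proof. exact: sqrtr_ge0. Qed.
Let card_off i : #|(fun k : 'I_d => k != i)|%:R = D - 1 :> R.
Proof. by rewrite cardC1 card_ord -subn1 natrB // (leq_trans _ d_ge2). Qed.

Let off_sum i : \sum_(k | k != i) l k = 1 - l i.
Proof. by rewrite sumr_off l_sum. Qed.
Let off_sqr i : \sum_(k | k != i) l k ^+ 2 = D - l i ^+ 2.
Proof. by rewrite (sumr_off (fun k => l k ^+ 2)) l_sqr. Qed.

Lemma spectrum_min_ge i : (1 - (D - 1) * s) / D <= l i.
Proof.
(* Cauchy-Schwarz for the other entries: (1 - l i)^2 <= (D - 1) (D - l i^2). *)
have := sum_affine_sqr (fun k => k != i) l (D - 1) (l i - 1).
rewrite off_sum off_sqr card_off => sumE.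
have : 0 <= (D - 1) * ((D - 1) * (D - l i ^+ 2) - (1 - l i) ^+ 2).
  have -> : (D - 1) * ((D - 1) * (D - l i ^+ 2) - (1 - l i) ^+ 2) =
    \sum_(k | k != i) ((D - 1) * l k + (l i - 1)) ^+ 2 by rewrite sumE; ring.
  by apply: sumr_ge0 => k _; apply: sqr_ge0.
rewrite pmulr_rge0 ?subr_gt0 => [off_ge0|]; last by have := D_ge2; lra.
have D_gt0 : 0 < D by have := D_ge2; lra.
have : 1 - l i * D <= (D - 1) * s.
  apply: le_of_sqr_le; first by apply: mulr_ge0; [have := D_ge2; lra | exact: s_ge0].
  have := mulr_ge0 (ltW D_gt0) off_ge0.
  have e : D * ((D - 1) * (D - l i ^+ 2) - (1 - l i) ^+ 2) =
    (D - 1) ^+ 2 * (D + 1) - (1 - l i * D) ^+ 2 by ring.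
  by rewrite exprMn s_sqr; lra.
by rewrite ler_pdivrMr //; lra.
Qed.

Let D_sqrt : D = s ^+ 2 - 1. Proof. by rewrite s_sqr addrK. Qed.
Let s_sqrB1_neq0 : s ^+ 2 - 1 != 0. Proof. by rewrite -D_sqrt; have := D_ge2; lra. Qed.

Lemma spectrum_min_eq i : l i = (1 - (D - 1) * s) / D ->
  forall k, k != i -> l k = (1 + s) / D.
Proof.
move=> l_i; have := sum_affine_sqr (fun k => k != i) l 1 (- ((1 + s) / D)).
rewrite off_sum off_sqr card_off l_i => sumE.
have sum0 : \sum_(k | k != i) (1 * l k + - ((1 + s) / D)) ^+ 2 = 0.
  by rewrite sumE D_sqrt; field.
move=> k k_i; have /eqP := psumr_eq0P (fun k _ => sqr_ge0 _) sum0 k_i.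
by rewrite sqrf_eq0 mul1r subr_eq0 => /eqP.
Qed.

Let shift_sum m : \sum_k (l k + m) = 1 + D * m.
Proof. by rewrite big_split /= l_sum sumr_const card_ord mulr_natl. Qed.

Let shift_sqr m : \sum_k (l k + m) ^+ 2 = D + 2 * m + D * m ^+ 2.
Proof.
have := sum_affine_sqr xpredT l 1 m; rewrite /= l_sum l_sqr card_ord.
under eq_bigr do rewrite mul1r.
by move=> ->; ring.
Qed.

Lemma spectrum_neg_ge (m : R) : (forall k, - l k <= m) -> (s - 1) / D <= m.
Proof.
move=> m_ge; have x_ge0 k : 0 <= l k + m by have := m_ge k; lra.
have := sum_sqr_le_sqr_sum x_ge0; rewrite shift_sum shift_sqr => sqr_le.
have sum_ge0 : 0 <= 1 + D * m by rewrite -shift_sum sumr_ge0.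
have : s <= 1 + D * m.
  apply: le_of_sqr_le => //; rewrite s_sqr.
  have e : (1 + D * m) ^+ 2 - (D + 2 * m + D * m ^+ 2) =
    (D - 1) * (D * m ^+ 2 + 2 * m - 1) by ring.
  have : 0 <= D * m ^+ 2 + 2 * m - 1.
    by rewrite -(pmulr_rge0 _ (_ : 0 < D - 1)); have := D_ge2; lra.
  by have := D_ge2; nra.
by rewrite ler_pdivrMr; have := D_ge2; lra.
Qed.

Lemma spectrum_neg_eq : (forall k, - l k <= (s - 1) / D) ->
  exists i, l i = s + (1 - s) / D /\ forall k, k != i -> l k = (1 - s) / D.
Proof.
set m := (s - 1) / D => m_ge; have x_ge0 k : 0 <= l k + m by have := m_ge k; lra.
have sum_s : \sum_k (l k + m) = s by rewrite shift_sum /m D_sqrt; field.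
have sqr_s : \sum_k (l k + m) ^+ 2 = (\sum_k (l k + m)) ^+ 2.
  by rewrite shift_sqr sum_s /m D_sqrt; field.
have [i /andP[_ x_i_gt0]] : exists i, true && (0 < l i + m).
  apply: psumr_neq0P => [i _|]; first exact: x_ge0.
  by rewrite sum_s => s0; move: s_sqr; rewrite s0 expr0n /=; have := D_ge2; lra.
have others k : k != i -> l k + m = 0.
  exact: (sum_sqr_eq_sqr_sum x_ge0 sqr_s (lt0r_neq0 x_i_gt0)).
exists i; split; last by move=> k /others; rewrite /m; lra.
have := sumr_off (fun k => l k + m) i; rewrite big1 // sum_s => /eqP.
by rewrite eq_sym subr_eq0 => /eqP; rewrite /m; lra.
Qed.

End Spectra.

Section ComplexMatrices.
Variable R : realType.
Local Notation C := R[i].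
Local Open Scope sesquilinear_scope.

Lemma adjmxM m n p (A : 'M[C]_(m, n)) (B : 'M[C]_(n, p)) :
  (A *m B)^t* = B^t* *m A^t*.
Proof. by rewrite trmx_mul map_mxM. Qed.

Lemma hermitianmx_adjmxMl m n (V : 'M[C]_(m, n)) : Defs.hermitianmx (V^t* *m V).
Proof. by rewrite /Defs.hermitianmx adjmxM trmxCK. Qed.

Lemma psdmx_adjmxMl m n (V : 'M[C]_(m, n)) : psdmx (V^t* *m V).
Proof.
move=> v; rewrite mulmxA -mulmxA.
have -> : V *m v^t* = (v *m V^t*)^t* by rewrite adjmxM trmxCK.
by rewrite -dotmxE dnorm_ge0.
Qed.

Lemma mulmx_row_adj m n (V : 'M[C]_(m, n)) (X : 'M[C]_n) i :
  (row i V *m X *m (row i V)^t*) 0 0 = (V *m X *m V^t*) i i.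
Proof.
by rewrite !mxE; apply: eq_bigr => k _; rewrite !mxE; congr (_ * _);
  apply: eq_bigr => l _; rewrite !mxE.
Qed.

Lemma psdmx_conj_diag_ge0 m n (rho : 'M[C]_n) (V : 'M[C]_(m, n)) i :
  psdmx rho -> 0 <= (V *m rho *m V^t*) i i.
Proof. by move=> rho_psd; rewrite -mulmx_row_adj. Qed.

Lemma psdmx_conj_tr_ge0 m n (rho : 'M[C]_n) (V : 'M[C]_(m, n)) :
  psdmx rho -> 0 <= \tr (V *m rho *m V^t*).
Proof. by move=> rho_psd; apply: sumr_ge0 => i _; apply: psdmx_conj_diag_ge0. Qed.

Lemma unitarymx_row_dnorm m n (U : 'M[C]_(m, n)) i :
  U \is unitarymx -> (row i U *m (row i U)^t*) 0 0 = 1.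
Proof. by move=> /row_unitarymxP /(_ i i); rewrite dotmxE eqxx. Qed.

Lemma mxtrace_adjmxMl n (u : 'rV[C]_n) (X : 'M[C]_n) :
  \tr (u^t* *m u *m X) = (u *m X *m u^t*) 0 0.
Proof. by rewrite -mulmxA mxtrace_mulC /mxtrace big_ord1. Qed.

Lemma density_rank1 n (u : 'rV[C]_n) :
  (u *m u^t*) 0 0 = 1 -> density (u^t* *m u).
Proof.
move=> u_unit; split; [exact: hermitianmx_adjmxMl | exact: psdmx_adjmxMl |].
by rewrite -[u^t* *m u]mulmx1 mxtrace_adjmxMl mulmx1.
Qed.

Lemma rank1_projector n (u : 'rV[C]_n) : (u *m u^t*) 0 0 = 1 ->
  [/\ Defs.hermitianmx (u^t* *m u), (u^t* *m u) *m (u^t* *m u) = u^t* *m u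
    & \rank (u^t* *m u) = 1%N].
Proof.
move=> u_unit; have uu1 : u *m u^t* = 1%:M.
  by apply/matrixP => a b; rewrite !ord1 u_unit mxE.
split; [exact: hermitianmx_adjmxMl | by rewrite mulmxA mulmxtVK //; apply/unitarymxP |].
apply/eqP; rewrite eqn_leq (leq_trans (mxrankM_maxr _ _) (rank_leq_row _)) lt0n.
rewrite mxrank_eq0; apply: contra_neq (@oner_neq0 C) => u0.
by have [_ _ <-] := density_rank1 u_unit; rewrite u0 mxtrace0.
Qed.

Lemma density_unitary_conj n (U rho : 'M[C]_n) :
  U \is unitarymx -> density rho -> density (U *m rho *m U^t*).
Proof.
move=> /unitarymxP U_unit [rho_herm rho_psd rho_tr]; split.
- by rewrite /Defs.hermitianmx !adjmxM trmxCK rho_herm mulmxA.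
- move=> v; rewrite !mulmxA -mulmxA.
  have -> : U^t* *m v^t* = (v *m U)^t* by rewrite adjmxM.
  exact: rho_psd.
- by rewrite mxtrace_mulC mulmxA (mulmx1C U_unit) mul1mx.
Qed.

Lemma mxtrace_unitary_conj n (U X Y : 'M[C]_n) : U \is unitarymx ->
  \tr ((U *m X *m U^t*) *m (U *m Y *m U^t*)) = \tr (X *m Y).
Proof.
move=> U_unit; rewrite !mulmxA mulmxKtV // mxtrace_mulC !mulmxA.
by rewrite (mulmx1C (unitarymxP U_unit)) mul1mx.
Qed.

Lemma Re_add (x y : C) : complex.Re (x + y) = complex.Re x + complex.Re y.
Proof. exact: (raddfD (@complex.Re R : Rcomplex R -> R)). Qed.

Lemma Re_sum (I : finType) (F : I -> C) :
  complex.Re (\sum_i F i) = \sum_i complex.Re (F i).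
Proof. exact: (raddf_sum (@complex.Re R : Rcomplex R -> R)). Qed.

Lemma Re_ge0 (x : C) : 0 <= x -> 0 <= complex.Re x.
Proof. by rewrite lecE => /andP[]. Qed.

Lemma Re_mul_real (x : C) (r : R) :
  complex.Re (x * (r%:C)%C) = complex.Re x * r.
Proof. by case: x => a b /=; rewrite mulr0 subr0. Qed.

End ComplexMatrices.

Section Spectral.
Variable R : realType.
Local Notation C := R[i].
Local Open Scope sesquilinear_scope.
Local Open Scope complex_scope.

Definition eigval n (A : 'M[C]_n) i : R := complex.Re (spectral_diag A 0 i).

Variables (n : nat) (A : 'M[C]_n).
Hypothesis A_herm : Defs.hermitianmx A.

Lemma eigval_diagonalization : exists2 U : 'M[C]_n, U \is unitarymx &
  A = U^t* *m diag_mx (\row_i (eigval A i)%:C) *m U.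
Proof.
have A_hermsym : A \is hermsymmx.
  by apply/is_hermitianmxP; rewrite expr0 scale1r A_herm.
exists (spectralmx A); first exact: spectral_unitarymx.
have /hermitian_normalmx /orthomx_spectralP {1}-> := A_hermsym.
rewrite invmx_unitary ?spectral_unitarymx //; congr (_ *m _ *m _).
congr diag_mx; apply/rowP => i; rewrite mxE /eigval.
by have /mxOverP /(_ 0 i) /RRe_real := hermitian_spectral_diag_real A_hermsym.
Qed.

Lemma mxtrace_eigval : \tr A = (\sum_i eigval A i)%:C.
Proof.
move: eigval_diagonalization; move: (eigval A) => l [U U_unit ->].
rewrite mxtrace_mulC mulmxA (unitarymxP U_unit) mul1mx mxtrace_diag.
by rewrite rmorph_sum; apply: eq_bigr => i _; rewrite mxE.
Qed.

Lemma mxtrace_sqr_eigval : \tr (A *m A) = (\sum_i eigval A i ^+ 2)%:C.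
Proof.
move: eigval_diagonalization; move: (eigval A) => l [U U_unit ->].
rewrite !mulmxA mulmxtVK // mxtrace_mulC !mulmxA (unitarymxP U_unit) mul1mx.
rewrite mulmx_diag mxtrace_diag rmorph_sum.
by apply: eq_bigr => i _; rewrite !mxE rmorphXn expr2.
Qed.

Lemma expectation_convex rho : density rho -> exists mu : 'I_n -> R,
  [/\ forall i, 0 <= mu i, \sum_i mu i = 1 &
      complex.Re (\tr (rho *m A)) = \sum_i mu i * eigval A i].
Proof.
move: eigval_diagonalization; move: (eigval A) => l [U U_unit ->].
case=> _ rho_psd rho_tr; set sigma := U *m rho *m U^t*.
have sigma_tr : \tr sigma = 1.
  by rewrite mxtrace_mulC mulmxA (mulmx1C (unitarymxP U_unit)) mul1mx.
exists (fun i => complex.Re (sigma i i)); split.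
- by move=> i; apply/Re_ge0/psdmx_conj_diag_ge0.
- by rewrite -Re_sum -/(mxtrace _) sigma_tr.
rewrite !mulmxA mxtrace_mulC !mulmxA -/sigma.
rewrite mul_mx_diag /mxtrace Re_sum.
by apply: eq_bigr => i _; rewrite !mxE Re_mul_real.
Qed.

Lemma expectation_ge rho c : density rho -> (forall i, c <= eigval A i) ->
  c <= complex.Re (\tr (rho *m A)).
Proof.
by move=> /expectation_convex [mu [mu_ge0 mu_sum ->]]; apply: convex_ge.
Qed.

Lemma expectation_eq_min rho c : density rho -> (forall i, c <= eigval A i) ->
  complex.Re (\tr (rho *m A)) = c -> exists i, eigval A i = c.
Proof.
by move=> /expectation_convex [mu [mu_ge0 mu_sum ->]]; apply: convex_eq_min.
Qed.

Lemma eigenstate i : exists2 rho, density rho & \tr (rho *m A) = (eigval A i)%:C.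
Proof.
move: eigval_diagonalization; move: (eigval A) => l [U U_unit ->].
exists ((row i U)^t* *m row i U); first exact/density_rank1/unitarymx_row_dnorm.
rewrite mxtrace_adjmxMl mulmx_row_adj !mulmxA (unitarymxP U_unit) mul1mx.
by rewrite -mulmxA (unitarymxP U_unit) mulmx1 mxE eqxx mxE.
Qed.

Lemma eigval_rank1 i y : (forall k, k != i -> eigval A k = y) ->
  exists2 u : 'rV[C]_n, (u *m u^t*) 0 0 = 1 &
    A = (eigval A i - y)%:C *: (u^t* *m u) + (y%:C)%:M.
Proof.
move: eigval_diagonalization; move: (eigval A) => l [U U_unit ->] l_y.
exists (row i U); first exact: unitarymx_row_dnorm.
have diagE : diag_mx (\row_k (l k)%:C) = (l i - y)%:C *: delta_mx i i + (y%:C)%:M.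
  apply/matrixP => a b; rewrite !mxE; have [<-|ab] := eqVneq a b; last first.
    rewrite !mulr0n addr0; case: (a =P i) => [ai|_]; last by rewrite mulr0.
    by rewrite -ai [b == a]eq_sym (negbTE ab) mulr0.
  rewrite !mulr1n andbb; case: (a =P i) => [->|/eqP ai].
    by rewrite mulr1 -rmorphD /= subrK.
  by rewrite mulr0 add0r l_y.
rewrite diagE mulmxDr mulmxDl mul_mx_scalar -scalemxAl (mulmx1C (unitarymxP U_unit)).
rewrite scalemx1 -scalemxAr -scalemxAl rowE adjmxM -!mulmxA.
have -> : (delta_mx 0 i : 'rV[C]_n)^t* = delta_mx i 0.
  by apply/matrixP => a b; rewrite !mxE andbC conjC_nat.
by rewrite (mulmxA (delta_mx i 0)) mul_delta_mx mulmxA.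
Qed.

End Spectral.

Section Negativity.
Variable R : realType.
Local Notation C := R[i].
Local Open Scope classical_set_scope.
Variables (d : nat) (Q : 'I_(d ^ 2) -> 'M[C]_d).
Hypothesis Q_herm : forall j, Defs.hermitianmx (Q j).

Lemma negativity_min_eigval j i :
  (forall k l, eigval (Q j) i <= eigval (Q k) l) -> eigval (Q j) i <= 0 ->
  negativity Q = - eigval (Q j) i.
Proof.
move=> ji_min ji_le0; set m := - eigval (Q j) i.
have state_le rho : density rho -> negativity_state Q rho <= m.
  move=> rho_dens; rewrite /negativity_state ge_max oppr_ge0 ji_le0 /=.
  apply: bigmax_le => [|k _]; first by rewrite oppr_ge0.
  by rewrite /m lerN2; apply: (expectation_ge (Q_herm k) rho_dens) => l; apply: ji_min.
have [rho0 rho0_dens rho0_tr] := eigenstate (Q_herm j) i.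
have m_state : m = negativity_state Q rho0.
  apply/le_anti; rewrite state_le // andbT /negativity_state le_max; apply/orP; right.
  by rewrite (bigD1 j) //= le_max rho0_tr lexx.
have m_in : [set x | exists2 rho, density rho & x = negativity_state Q rho] m.
  by exists rho0.
apply/le_anti/andP; split.
  by apply: ge_sup; [exists m | move=> _ [rho rho_dens ->]; exact: state_le].
apply: sup_upper_bound => //; split; first by exists m.
by exists m => _ [rho rho_dens ->]; exact: state_le.
Qed.

End Negativity.

Section AffineSIC.
Variable R : realType.
Local Notation C := R[i].
Local Open Scope sesquilinear_scope.
Local Open Scope complex_scope.
Variable d : nat.
Hypothesis d_gt0 : (0 < d)%N.

Definition Qaffine (e : R) (P : 'M[C]_d) : 'M[C]_d :=
  e%:C *: P + (((1 - e) / d%:R)%:C)%:M.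

Lemma Qaffine_constE (e : R) : ((1 - e) / d%:R)%:C = (1 - e%:C) / d%:R.
Proof. by rewrite rmorphM rmorphB rmorph1 fmorphV rmorph_nat. Qed.

Lemma expectation_Qaffine e P rho : density rho ->
  complex.Re (\tr (rho *m Qaffine e P)) =
  e * complex.Re (\tr (rho *m P)) + (1 - e) / d%:R.
Proof.
case=> _ _ rho_tr; rewrite mulmxDr -scalemxAr mul_mx_scalar linearD /= !mxtraceZ.
by rewrite rho_tr mulr1 Re_add mulrC Re_mul_real mulrC.
Qed.

Lemma expectation_proj_ge0 (P rho : 'M[C]_d) :
  Defs.hermitianmx P -> P *m P = P -> density rho -> 0 <= complex.Re (\tr (rho *m P)).
Proof.
move=> P_herm P_idem [_ rho_psd _]; rewrite -P_idem -{1}P_herm mulmxA mxtrace_mulC mulmxA.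
exact/Re_ge0/psdmx_conj_tr_ge0.
Qed.

Variable Q : 'I_(d ^ 2) -> 'M[C]_d.
Hypothesis Q_nqpr : NQPR Q.

Lemma SIC_of_Qaffine e (P : 'I_(d ^ 2) -> 'M[C]_d) : e ^+ 2 = d.+1%:R ->
  (forall j, [/\ Defs.hermitianmx (P j), P j *m P j = P j & \rank (P j) = 1%N]) ->
  (forall j, Q j = Qaffine e (P j)) -> SIC P.
Proof.
move=> e_sqr P_proj Q_aff; split; [|split; [|split]]; try by move=> j; case: (P_proj j).
have [_ [Q_tr Q_trM]] := Q_nqpr.
have e2 : e%:C ^+ 2 = d.+1%:R by rewrite -rmorphXn e_sqr rmorph_nat.
have eC_neq0 : e%:C != 0.
  by apply: contra_eq_neq e2 => ->; rewrite expr0n eq_sym pnatr_eq0.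
have dE : (d%:R : C) = e%:C ^+ 2 - 1 by rewrite e2 -natr1 addrK.
have e21_neq0 : e%:C ^+ 2 - 1 != 0 by rewrite -dE pnatr_eq0 -lt0n.
have P_E j : P j = (e%:C)^-1 *: (Q j - (((1 - e) / d%:R)%:C)%:M).
  by rewrite Q_aff addrK scalerA mulVf // scale1r.
(* With c := (1 - e) / d, tr (P_j P_k) = (d delta_jk - 2 c + d c^2) / e^2,
   and d c^2 - 2 c = (e^2 - 1) / d = 1. *)
move=> j k; rewrite !P_E -scalemxAl -scalemxAr !mxtraceZ mulmxBl !mulmxBr.
rewrite !mul_mx_scalar !mul_scalar_mx !linearB /= !mxtraceZ mxtrace_scalar Q_trM !Q_tr.
rewrite Qaffine_constE -[(_ / _) *+ d]mulr_natr -e2 dE.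
move: (e%:C) eC_neq0 e21_neq0 ((j == k)%:R : C) => E E_neq0 E21_neq0 delta.
by field; rewrite E_neq0 E21_neq0.
Qed.

Lemma SIC_of_rank1 e : e ^+ 2 = d.+1%:R ->
  (forall j, exists2 u : 'rV[C]_d, (u *m u^t*) 0 0 = 1 & Q j = Qaffine e (u^t* *m u)) ->
  exists P, SIC P /\ forall j, Q j = Qaffine e (P j).
Proof.
move=> e_sqr /fin_all_exists2 [u u_unit Q_aff].
exists (fun j => (u j)^t* *m u j); split => //.
by apply: SIC_of_Qaffine e_sqr _ Q_aff => j; apply: rank1_projector.
Qed.

Lemma QminusE (P : 'I_(d ^ 2) -> 'M[C]_d) j :
  Qminus P j = Qaffine (Num.sqrt d.+1%:R) (P j).
Proof. by rewrite /Qaffine Qaffine_constE. Qed.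

Lemma QplusE (P : 'I_(d ^ 2) -> 'M[C]_d) j :
  Qplus P j = Qaffine (- Num.sqrt d.+1%:R) (P j).
Proof. by rewrite /Qaffine Qaffine_constE rmorphN opprK scaleNr. Qed.

End AffineSIC.

Section Main.
Variable R : realType.
Local Notation C := R[i].
Local Open Scope complex_scope.
Variables (d : nat) (Q : 'I_(d ^ 2) -> 'M[C]_d).
Hypotheses (d_ge2 : (2 <= d)%N) (Q_nqpr : NQPR Q).
Local Notation D := (d%:R : R).
Local Notation s := (Num.sqrt (d.+1%:R : R)).

Let d_gt0 : (0 < d)%N. Proof. exact: ltnW. Qed.
Let s_sqr : s ^+ 2 = d.+1%:R. Proof. by rewrite sqr_sqrtr. Qed.
Let s_ge1 : 1 <= s.
Proof. by apply: le_of_sqr_le; rewrite ?sqrtr_ge0 // s_sqr expr1n ler1n. Qed.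

Let Q_herm j : Defs.hermitianmx (Q j). Proof. by case: Q_nqpr. Qed.

Let eigval_sum j : \sum_i eigval (Q j) i = 1.
Proof.
apply: (@complexI R); rewrite -(mxtrace_eigval (Q_herm j)) rmorph1.
by case: Q_nqpr => _ [-> _].
Qed.

Let eigval_sqr j : \sum_i eigval (Q j) i ^+ 2 = D.
Proof.
apply: (@complexI R); rewrite -(mxtrace_sqr_eigval (Q_herm j)) rmorph_nat.
by case: Q_nqpr => _ [_ ->]; rewrite eqxx mulr1.
Qed.

Lemma NplusE : Nplus R d = ((D - 1) * s - 1) / D.
Proof. by rewrite /Nplus -subn1 natrB. Qed.

Lemma negativity_minE : exists j i,
  (forall k l, eigval (Q j) i <= eigval (Q k) l) /\ negativity Q = - eigval (Q j) i.
Proof.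
have j0 : 'I_(d ^ 2) by exists 0%N; rewrite expn_gt0 d_gt0.
have [[j i] _ ji_min] :=
  @arg_minP _ _ _ (j0, Ordinal d_gt0) xpredT (fun p => eigval (Q p.1) p.2) isT.
have {}ji_min k l : eigval (Q j) i <= eigval (Q k) l by exact: ji_min (k, l) isT.
exists j, i; split => //; apply: negativity_min_eigval => //.
have : (s - 1) / D <= - eigval (Q j) i.
  by apply: spectrum_neg_ge d_ge2 (eigval_sum j) (eigval_sqr j) _ _ => k; rewrite lerN2.
have : 0 <= (s - 1) / D by rewrite divr_ge0 ?subr_ge0.
lra.
Qed.

Lemma negativity_bounds : Nminus R d <= negativity Q <= Nplus R d.
Proof.
have [j [i [ji_min ->]]] := negativity_minE; apply/andP; split.
  by apply: spectrum_neg_ge d_ge2 (eigval_sum j) (eigval_sqr j) _ _ => k; rewrite lerN2.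
rewrite NplusE lerNl -mulNr opprB.
exact: spectrum_min_ge d_ge2 (eigval_sum j) (eigval_sqr j) i.
Qed.

Lemma SIC_of_negativity_Nminus : negativity Q = Nminus R d ->
  exists P, SIC P /\ forall j, Q j = Qminus P j.
Proof.
have [j [i [ji_min ->]]] := negativity_minE => ji_eq.
suff [P [P_SIC Q_aff]] : exists P, SIC P /\ forall k, Q k = Qaffine s (P k).
  by exists P; split => // k; rewrite QminusE.
apply: (SIC_of_rank1 d_gt0 Q_nqpr s_sqr) => k.
have neg_le l : - eigval (Q k) l <= (s - 1) / D.
  by rewrite -[_ / _]/(Nminus R d) -ji_eq lerN2.
have [l [l_eq others]] := spectrum_neg_eq d_ge2 (eigval_sum k) (eigval_sqr k) neg_le.
have [u u_unit Q_rank1] := eigval_rank1 (Q_herm k) others.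
by exists u; rewrite // Q_rank1 l_eq addrK.
Qed.

Lemma negativity_Qminus P : SIC P -> (forall j, Q j = Qminus P j) ->
  negativity Q = Nminus R d.
Proof.
move=> [P_herm [P_idem _]] Q_minus.
apply/le_anti/andP; split; last by case/andP: negativity_bounds.
have [j [i [_ ->]]] := negativity_minE.
have [rho rho_dens rho_tr] := eigenstate (Q_herm j) i.
have := expectation_Qaffine s (P j) rho_dens.
rewrite -QminusE -Q_minus rho_tr /= => ->.
have := mulr_ge0 (le_trans ler01 s_ge1) (expectation_proj_ge0 (P_herm j) (P_idem j) rho_dens).
rewrite /Nminus; lra.
Qed.

Lemma negativity_Qplus P : SIC P -> (forall j, Q j = Qplus P j) ->
  negativity Q = Nplus R d.
Proof.
move=> [P_herm [P_idem [_ P_tr]]] Q_plus.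
apply/le_anti/andP; split; first by case/andP: negativity_bounds.
have [j [i [ji_min ->]]] := negativity_minE.
have Pj_tr : \tr (P j *m P j) = 1 by rewrite P_tr eqxx mulr1 natr1 divff // pnatr_eq0.
have Pj_dens : density (P j).
  split; [exact: P_herm | | by rewrite -(P_idem j)].
  by rewrite -(P_idem j) -{1}(P_herm j); apply: psdmx_adjmxMl.
have := expectation_ge (Q_herm j) Pj_dens (ji_min j).
rewrite Q_plus QplusE expectation_Qaffine // Pj_tr /= NplusE.
have -> : - s * 1 + (1 - - s) / D = - (((D - 1) * s - 1) / D).
  by field; rewrite pnatr_eq0 -lt0n.
by rewrite lerNr.
Qed.

Lemma SIC_of_negativity_Nplus : group_covariant Q -> negativity Q = Nplus R d ->
  exists P, SIC P /\ forall j, Q j = Qplus P j.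
Proof.
move=> Q_cov; have [j [i [_ ->]]] := negativity_minE; rewrite NplusE => ji_eq.
have ji_c : eigval (Q j) i = (1 - (D - 1) * s) / D.
  by rewrite -[LHS]opprK ji_eq -mulNr opprB.
have [rho rho_dens rho_tr] := eigenstate (Q_herm j) i.
suff [P [P_SIC Q_aff]] : exists P, SIC P /\ forall k, Q k = Qaffine (- s) (P k).
  by exists P; split => // k; rewrite QplusE.
apply: (SIC_of_rank1 d_gt0 Q_nqpr) => [|k]; first by rewrite sqrrN s_sqr.
(* Conjugating an eigenvector of Q j for its extremal eigenvalue by a symmetry
   mapping Q j to Q k gives a state whose Q k-expectation is that extremal value. *)
have [U [[U_unit _] UQ]] := Q_cov j k.
have c_le := spectrum_min_ge d_ge2 (eigval_sum k) (eigval_sqr k).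
have [l l_eq] : exists l, eigval (Q k) l = (1 - (D - 1) * s) / D.
  apply: (expectation_eq_min (Q_herm k) (density_unitary_conj U_unit rho_dens) c_le).
  by rewrite -UQ mxtrace_unitary_conj // rho_tr ji_c.
have others := spectrum_min_eq d_ge2 (eigval_sum k) (eigval_sqr k) l_eq.
have [u u_unit Q_rank1] := eigval_rank1 (Q_herm k) others.
exists u; rewrite // Q_rank1 l_eq /Qaffine opprK.
by congr (_%:C *: _ + _); field; rewrite pnatr_eq0 -lt0n.
Qed.

End Main.

Unset Implicit Arguments.

Theorem theorem1 (R : realType) (d : nat) (Q : 'I_(d ^ 2) -> 'M[R[i]]_d) :
  (2 <= d)%N -> NQPR Q ->
  [/\ Nminus R d <= negativity Q <= Nplus R d,
      negativity Q = Nminus R d <->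
        (exists P, SIC P /\ forall j, Q j = Qminus P j)
    & group_covariant Q ->
      (negativity Q = Nplus R d <->
        (exists P, SIC P /\ forall j, Q j = Qplus P j))].
Proof.
move=> d_ge2 Q_nqpr; split.
- exact: negativity_bounds.
- split; first exact: SIC_of_negativity_Nminus.
  by case=> P [P_SIC Q_minus]; apply: negativity_Qminus P_SIC Q_minus.
- move=> Q_cov; split; first exact: SIC_of_negativity_Nplus.
  by case=> P [P_SIC Q_plus]; apply: negativity_Qplus P_SIC Q_plus.
Qed.
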